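(* Let $\tau>0$, $0\le\lambda<1$, $u_n\in\mathcal V_{[0,1]}$ with $M:=\mathcal M(u_n)$ satisfying $0<M<\mathcal M(\mathbf 1)$. Let $A$ be the set of values of $e^{-\tau\Delta}u_n$ and $a_\alpha:=\sum_{i:(e^{-\tau\Delta}u_n)_i=\alpha}d_i^r$ for $\alpha\in A$. If $\nu\in\mathbb R$ solves \[ M = \sum_{\alpha \in A} a_{\alpha} \begin{cases} 1, & \nu \leq \alpha -(1-\lambda),\\ \frac{\alpha-\nu}{1-\lambda}, & \alpha-(1-\lambda)<\nu < \alpha,\\ 0, &\nu\geq \alpha, \end{cases} \] then $\nu \in [\lambda\min A,\lambda\max A]\subseteq(0,\lambda)$.
   Context: $G=(V,E)$ is a finite, simple, connected, undirected graph with weights $\omega_{ij}=\omega_{ji}>0$ for $ij\in E$, $\omega_{ij}=0$ otherwise; $d_i=\sum_j\omega_{ij}$, $r\in[0,1]$ fixed. $\mathcal V$ = functions $V\to\mathbb R$ with $\langle u,v\rangle_{\mathcal V}=\sum_i u_iv_id_i^r$; $\mathcal V_{[0,1]}$ = functions $V\to[0,1]$. $(\Delta u)_i=d_i^{-r}\sum_j\omega_{ij}(u_i-u_j)$, $e^{-\tau\Delta}$ its matrix exponential. $\mathbf 1$ all-ones; $\mathcal M(u)=\langle u,\mathbf 1\rangle_{\mathcal V}$. *)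

From HB Require Import structures.
From mathcomp Require Import all_boot all_order all_algebra.
From mathcomp Require Import all_classical all_reals all_analysis.
Set Implicit Arguments. Unset Strict Implicit. Unset Printing Implicit Defensive.
Import Order.TTheory GRing.Theory Num.Theory.
Import numFieldNormedType.Exports.
Local Open Scope ring_scope.

(* A weighted simple connected graph is given by its weight matrix w:
   w i j = w j i, w i j >= 0, w i i = 0 (no loops), edges = {ij | w i j > 0}. *)
Definition weighted_graph (R : realType) (n : nat) (w : 'M[R]_n.+1) : Prop :=
  (forall i j, w i j = w j i) /\ (forall i j, 0 <= w i j) /\ (forall i, w i i = 0).

Definition connected_graph (R : realType) (n : nat) (w : 'M[R]_n.+1) : Prop :=
  forall i j : 'I_n.+1, connect [rel x y | 0 < w x y] i j.

Definition deg (R : realType) (n : nat) (w : 'M[R]_n.+1) (i : 'I_n.+1) : R :=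
  \sum_j w i j.

(* inner product on V: <u,v> = sum_i u_i v_i d_i^r ; mass M(u) = <u,1> *)
Definition mass (R : realType) (n : nat) (w : 'M[R]_n.+1) (r : R)
  (u : 'I_n.+1 -> R) : R :=
  \sum_i u i * (deg w i `^ r).

(* Matrix of the graph Laplacian:
   (Delta u)_i = d_i^{-r} sum_j w_ij (u_i - u_j)
              = sum_j [d_i^{-r} ((i==j) d_i - w_ij)] u_j   (using w_ii = 0). *)
Definition laplacian (R : realType) (n : nat) (w : 'M[R]_n.+1) (r : R)
  : 'M[R]_n.+1 :=
  \matrix_(i, j) ((deg w i `^ r)^-1 * ((i == j)%:R * deg w i - w i j)).

Definition expmx (R : realType) (m : nat) (A : 'M[R]_m) : 'M[R]_m :=
  \matrix_(i, j) limn (fun N : nat => \sum_(k < N) (A ^+ k) i j / (k`!)%:R).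

Definition heat (R : realType) (n : nat) (w : 'M[R]_n.+1) (r tau : R)
  (u : 'I_n.+1 -> R) (i : 'I_n.+1) : R :=
  \sum_j expmx (- (tau *: laplacian w r)) i j * u j.

Definition values (R : realType) (n : nat) (v : 'I_n.+1 -> R) : seq R :=
  undup [seq v i | i <- enum 'I_n.+1].

Definition min_values (R : realType) (n : nat) (v : 'I_n.+1 -> R) : R :=
  \big[Num.min/v ord0]_i v i.
Definition max_values (R : realType) (n : nat) (v : 'I_n.+1 -> R) : R :=
  \big[Num.max/v ord0]_i v i.

Definition a_coef (R : realType) (n : nat) (w : 'M[R]_n.+1) (r : R)
  (v : 'I_n.+1 -> R) (alpha : R) : R :=
  \sum_(i | v i == alpha) (deg w i `^ r).

Definition clipf (R : realType) (lam alpha nu : R) : R :=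
  if nu <= alpha - (1 - lam) then 1
  else if nu < alpha then (alpha - nu) / (1 - lam)
  else 0.

(* The heat kernel K = e^(-tau Delta) has positive entries: -tau Delta has
   nonnegative off-diagonal entries, positive exactly on the edges, so after a
   shift by a multiple c of the identity it becomes a nonnegative matrix whose
   positivity graph is connected, and e^(-tau Delta) = e^(-c) e^(-tau Delta + c).
   Its rows sum to 1 because Delta 1 = 0, and it preserves the d^r-weighted mass
   because Delta is self-adjoint for that weight.  Hence h := K u takes values
   in (0,1) and M(h) = M(u), so the hypothesis says
   sum_i d_i^r (clip(h_i) - h_i) = 0.  But clip(h_i) > h_i for every i when
   nu < lam min h, and clip(h_i) < h_i for every i when nu > lam max h. *)

From HB Require Import structures.
From mathcomp Require Import all_boot all_order all_algebra.
From mathcomp Require Import all_classical all_reals all_analysis.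
From mathcomp Require Import ring lra.
Import Order.TTheory GRing.Theory Num.Theory.
Import numFieldNormedType.Exports.
Local Open Scope classical_set_scope.
Local Open Scope ring_scope.
Set Implicit Arguments. Unset Strict Implicit. Unset Printing Implicit Defensive.

Lemma sum_indicator_mul (R : pzSemiRingType) (I : finType) (g : I -> R) x0 :
  \sum_x (x == x0)%:R * g x = g x0.
Proof. by rewrite (bigD1 x0) //= eqxx mul1r big1 ?addr0 // => x /negbTE->; rewrite mul0r. Qed.

Lemma weighted_sum_gt0 (R : numDomainType) (I : finType) (q g : I -> R) i0 :
  (forall i, 0 <= q i) -> 0 < q i0 -> (forall i, 0 < g i) -> 0 < \sum_i q i * g i.
Proof.
move=> q0 qi0 g0; rewrite (bigD1 i0) //= ltr_pwDl ?mulr_gt0 // sumr_ge0 // => i _.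
by rewrite mulr_ge0 // ltW.
Qed.

Section CauchyProduct.
Variable R : realType.
Implicit Types x y X Y : R ^nat.

Definition cauchy_product x y : R ^nat :=
  fun k => \sum_(0 <= i < k.+1) x (k - i)%N * y i.

Lemma series_cauchy_product x y N :
  series (cauchy_product x y) N = \sum_(0 <= i < N) y i * series x (N - i)%N.
Proof.
elim: N => [|N IH]; first by rewrite /series /= !big_geq.
rewrite seriesSr IH /cauchy_product big_nat_recr //= [in RHS]big_nat_recr //=.
rewrite subnn addrA; congr (_ + _); last first.
  by rewrite /series /= subSnn big_nat1 mulrC.
rewrite -big_split /=; apply: eq_big_nat => i /andP[_ iN].
by rewrite (subSn (ltnW iN)) seriesSr mulrDr [x _ * _]mulrC.
Qed.

Lemma series_mul_sub_cauchy_product x y N :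
  series x N * series y N - series (cauchy_product x y) N =
  \sum_(0 <= i < N) y i * \sum_(N - i <= j < N) x j.
Proof.
rewrite series_cauchy_product [series y N]/series /= big_distrr /= -sumrB.
apply: eq_big_nat => i /andP[_ iN]; rewrite mulrC -mulrBr /series /=.
by rewrite (@big_cat_nat _ _ _ (N - i) 0 N _ _ (leq0n _) (leq_subr i N)) /= addrAC subrr add0r.
Qed.

Lemma cvg_series_cauchy_product x y X Y (lx ly a b : R) :
  (forall k, `|x k| <= X k) -> (forall k, `|y k| <= Y k) ->
  series x @ \oo --> lx -> series y @ \oo --> ly ->
  series X @ \oo --> a -> series Y @ \oo --> b ->
  series (cauchy_product X Y) @ \oo --> a * b ->
  series (cauchy_product x y) @ \oo --> lx * ly.
Proof.
move=> xX yY cx cy cX cY cXY.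
pose defect s t N := series s N * series t N - series (cauchy_product s t) N.
have defect_le N : `|defect x y N| <= defect X Y N.
  rewrite /defect !series_mul_sub_cauchy_product.
  apply: le_trans (ler_norm_sum _ _ _) _; apply: ler_sum_nat => i _.
  rewrite normrM; apply: ler_pM => //.
  by apply: le_trans (ler_norm_sum _ _ _) _; apply: ler_sum_nat.
have dXY : defect X Y @ \oo --> 0.
  by rewrite -(subrr (a * b)); apply: cvgB => //; apply: cvgM.
have dxy : defect x y @ \oo --> 0.
  apply: (@squeeze_cvgr _ _ _ _ (- defect X Y) (defect X Y)) => //.
    by near=> N; rewrite -ler_norml.
  by rewrite -oppr0; apply: cvgN.
have -> : series (cauchy_product x y) = fun N => series x N * series y N - defect x y N.
  by apply/funext => N; rewrite /defect opprB addrC subrK.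
by rewrite -(subr0 (lx * ly)); apply: cvgB => //; apply: cvgM.
Unshelve. all: by end_near.
Qed.

Lemma binomial_fact_split (u v : R) k i : (i <= k)%N ->
  u * v *+ 'C(k, i) / k`!%:R = u / (k - i)`!%:R * (v / i`!%:R).
Proof.
move=> ik; rewrite -(bin_fact ik) !natrM -mulr_natr.
have fact_neq0 l : (l`!%:R : R) != 0 by rewrite pnatr_eq0 -lt0n fact_gt0.
have bin_neq0 : ('C(k, i)%:R : R) != 0 by rewrite pnatr_eq0 -lt0n bin_gt0.
by field; rewrite !fact_neq0 bin_neq0.
Qed.

Lemma cauchy_product_exp_coeff a b :
  cauchy_product (exp_coeff a) (exp_coeff b) = exp_coeff (a + b).
Proof.
apply/funext => k; rewrite /cauchy_product /exp_coeff /= exprDn big_mkord.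
by rewrite mulr_suml; apply: eq_bigr => i _; rewrite binomial_fact_split // -ltnS.
Qed.

End CauchyProduct.

Section MatrixExponential.
Variables (R : realType) (m : nat).
Implicit Types (A P : 'M[R]_m) (i j : 'I_m).

Definition expmx_term A i j : R ^nat := fun k => (A ^+ k) i j / k`!%:R.

Lemma mx_norm_ge0 A : 0 <= mx_norm A.
Proof. by rewrite mx_normrE bigmax_ge_id. Qed.

Lemma ler_mx_norm_entry A i j : `|A i j| <= mx_norm A.
Proof.
by rewrite mx_normrE (le_bigmax _ (fun ij => `|A ij.1 ij.2|) (i, j)).
Qed.

Lemma mxpow_norm_le A k i j : `|(A ^+ k) i j| <= (m%:R * mx_norm A) ^+ k.
Proof.
elim: k i j => [|k IH] i j.
  by rewrite !expr0 mxE; case: (i == j); rewrite ?normr1 ?normr0.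
rewrite exprSr -mulmxE mxE (le_trans (ler_norm_sum _ _ _)) //.
under eq_bigr do rewrite normrM.
have term_le l : `|(A ^+ k) i l| * `|A l j| <= (m%:R * mx_norm A) ^+ k * mx_norm A.
  by rewrite ler_pM ?IH ?ler_mx_norm_entry.
rewrite (le_trans (ler_sum _ (fun l _ => term_le l))) //.
by rewrite sumr_const card_ord exprSr -mulrnAr -[mx_norm A *+ m]mulr_natl.
Qed.

Lemma expmx_term_norm_le A i j k :
  `|expmx_term A i j k| <= exp_coeff (m%:R * mx_norm A) k.
Proof.
rewrite /expmx_term /exp_coeff /= normrM [`|_^-1|]ger0_norm ?invr_ge0 //.
by rewrite ler_wpM2r ?invr_ge0 ?mxpow_norm_le.
Qed.

Lemma expmxE A i j : expmx A i j = limn (series (expmx_term A i j)).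
Proof. by rewrite mxE; congr (limn _); apply/funext => N; rewrite /series /= big_mkord. Qed.

Lemma expmx_cvg A i j : series (expmx_term A i j) @ \oo --> expmx A i j.
Proof.
rewrite expmxE; apply: normed_cvg; apply: (series_le_cvg _ _ (expmx_term_norm_le A i j)).
- by move=> k.
- by move=> k; rewrite exp_coeff_ge0 // mulr_ge0 ?mx_norm_ge0.
- exact: is_cvg_series_exp_coeff.
Qed.

Lemma expmx_term_add_scalar A c i j :
  expmx_term (A + c%:M) i j = cauchy_product (expmx_term A i j) (exp_coeff c).
Proof.
have Ac : GRing.comm A c%:M by rewrite /GRing.comm -!mulmxE scalar_mxC.
apply/funext => k; rewrite /expmx_term /cauchy_product (exprDn_comm _ Ac).
rewrite summxE big_mkord mulr_suml; apply: eq_bigr => l _.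
rewrite mulmxnE -rmorphXn -mulmxE mul_mx_scalar mxE /exp_coeff /=.
by rewrite [c ^+ l * (A ^+ _) i j]mulrC binomial_fact_split // -ltnS.
Qed.

Lemma expmx_add_scalar A c i j : expmx (A + c%:M) i j = expmx A i j * expR c.
Proof.
rewrite [LHS]expmxE; apply: cvg_lim => //; rewrite expmx_term_add_scalar.
pose p := m%:R * mx_norm A.
apply: (cvg_series_cauchy_product (X := exp_coeff p) (Y := exp_coeff `|c|)
          (a := expR p) (b := expR `|c|)).
- exact: expmx_term_norm_le.
- by move=> k; rewrite /exp_coeff /= normrM normrX [`|_^-1|]ger0_norm ?invr_ge0.
- exact: expmx_cvg.
- exact: is_cvg_series_exp_coeff.
- exact: is_cvg_series_exp_coeff.
- exact: is_cvg_series_exp_coeff.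
- by rewrite cauchy_product_exp_coeff -expRD; exact: is_cvg_series_exp_coeff.
Qed.

Lemma mxpow_ge0 P k i j : (forall i j, 0 <= P i j) -> 0 <= (P ^+ k) i j.
Proof.
move=> P0; elim: k i j => [|k IH] i j; first by rewrite expr0 mxE ler0n.
by rewrite exprSr -mulmxE mxE sumr_ge0 // => l _; rewrite mulr_ge0.
Qed.

Lemma mxpow_path_gt0 P a p : (forall i j, 0 <= P i j) ->
  path [rel x y | 0 < P x y] a p -> 0 < (P ^+ size p) a (last a p).
Proof.
move=> P0; elim: p a => [|b p IH] a /=; first by rewrite expr0 mxE eqxx ltr01.
case/andP=> Pab bp; rewrite exprS -mulmxE mxE (bigD1 b) //=.
by rewrite ltr_pwDl ?mulr_gt0 ?IH // sumr_ge0 // => l _; rewrite mulr_ge0 ?mxpow_ge0.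
Qed.

Lemma expmx_gt0 P i j : (forall i j, 0 <= P i j) ->
  connect [rel x y | 0 < P x y] i j -> 0 < expmx P i j.
Proof.
move=> P0 /connectP[p Pp ->].
have term_ge0 l : 0 <= expmx_term P i (last i p) l by rewrite divr_ge0 ?mxpow_ge0.
have series_nd : nondecreasing_seq (series (expmx_term P i (last i p))).
  by apply: nondecreasing_series => l _ _; apply: term_ge0.
have series_cvg := cvgP _ (@expmx_cvg P i (last i p)).
rewrite expmxE (lt_le_trans _ (nondecreasing_cvgn_le series_nd series_cvg (size p).+1)) //.
by rewrite seriesSr ltr_wpDl ?sumr_ge0 // ?divr_gt0 ?mxpow_path_gt0 ?ltr0n ?fact_gt0.
Qed.

(* Shifting by c := sum_l |A l l| gives a nonnegative matrix with at least the
   positive entries of A, and expmx A = e^(-c) expmx (A + c). *)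
Lemma expmx_Metzler_gt0 A i j : (forall i j, i != j -> 0 <= A i j) ->
  connect [rel x y | 0 < A x y] i j -> 0 < expmx A i j.
Proof.
move=> A0 Aij; pose c := \sum_l `|A l l|.
have shiftE k l : (A + c%:M) k l = A k l + c *+ (k == l) by rewrite !mxE.
have le_shift k l : A k l <= (A + c%:M) k l.
  by rewrite shiftE lerDl mulrn_wge0 ?sumr_ge0.
have -> : A = A + c%:M + (- c)%:M by rewrite -addrA -raddfD subrr raddf0 addr0.
rewrite expmx_add_scalar mulr_gt0 ?expR_gt0 // expmx_gt0 //.
  move=> k l; rewrite shiftE; case: eqVneq => [<-|kl]; last by rewrite addr0 A0.
  rewrite mulr1n -lerBlDr sub0r; apply: lerNnormlW.
  by rewrite /c (bigD1 k) //= lerDl sumr_ge0.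
apply: connect_sub Aij => k l /= Akl; apply: connect1 => /=.
exact: lt_le_trans Akl (le_shift k l).
Qed.

Lemma linear_form_expmx A (f : 'I_m -> 'I_m -> R) :
  (forall k, \sum_i \sum_j f i j * (A ^+ k.+1) i j = 0) ->
  \sum_i \sum_j f i j * expmx A i j = \sum_i f i i.
Proof.
move=> fA; pose F N := \sum_i \sum_j f i j * series (expmx_term A i j) N.
have cvgF : F @ \oo --> \sum_i \sum_j f i j * expmx A i j.
  apply: (cvg_big add_continuous) => i _; apply: (cvg_big add_continuous) => j _.
  by apply: cvgMl_tmp; apply: expmx_cvg.
have form_term k : \sum_i \sum_j f i j * expmx_term A i j k =
                   (\sum_i \sum_j f i j * (A ^+ k) i j) / k`!%:R.
  by rewrite mulr_suml; apply: eq_bigr => i _; rewrite mulr_suml;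
     apply: eq_bigr => j _; rewrite mulrA.
have form0 : \sum_i \sum_j f i j * (A ^+ 0) i j = \sum_i f i i.
  apply: eq_bigr => i _; rewrite (bigD1 i) //= expr0 mxE eqxx mulr1 big1 ?addr0 //.
  by move=> j ji; rewrite mxE eq_sym (negbTE ji) mulr0.
have F_succ N : F N.+1 = \sum_i f i i.
  rewrite /F; under eq_bigr do under eq_bigr do rewrite /series /= big_distrr.
  under eq_bigr do rewrite exchange_big /=.
  rewrite exchange_big big_nat_recl //= form_term form0 fact0 divr1.
  rewrite [X in _ + X]big1 ?addr0 //.
  by move=> k _; rewrite form_term fA mul0r.
move: cvgF; rewrite -cvg_shiftS; under eq_fun do rewrite F_succ.
by move/cvg_lim => <- //; rewrite lim_cst.
Qed.

Lemma expmx_rowsum A i : (forall i, \sum_j A i j = 0) -> \sum_j expmx A i j = 1.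
Proof.
move=> A0; have -> : \sum_j expmx A i j = \sum_x \sum_j (x == i)%:R * expmx A x j.
  by under [RHS]eq_bigr do rewrite -mulr_sumr; rewrite sum_indicator_mul.
rewrite linear_form_expmx => [|k].
  by rewrite (bigD1 i) //= eqxx big1 ?addr0 // => x /negbTE->.
under eq_bigr do rewrite -mulr_sumr; rewrite sum_indicator_mul exprSr -mulmxE.
under eq_bigr do rewrite mxE.
by rewrite exchange_big big1 // => l _; rewrite -mulr_sumr A0 mulr0.
Qed.

Lemma expmx_weighted_colsum A (q : 'I_m -> R) j :
  (forall j, \sum_i q i * A i j = 0) -> \sum_i q i * expmx A i j = q j.
Proof.
move=> A0; have -> : \sum_i q i * expmx A i j =
                     \sum_i \sum_x ((x == j)%:R * q i) * expmx A i x.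
  by apply: eq_bigr => i _; under [RHS]eq_bigr do rewrite -mulrA; rewrite sum_indicator_mul.
rewrite linear_form_expmx => [|k]; first by rewrite sum_indicator_mul.
under eq_bigr do under eq_bigr do rewrite -mulrA.
under eq_bigr do rewrite sum_indicator_mul.
rewrite exprS -mulmxE; under eq_bigr do rewrite mxE mulr_sumr.
rewrite exchange_big big1 // => l _.
by under eq_bigr do rewrite mulrA; rewrite -mulr_suml A0 mul0r.
Qed.

End MatrixExponential.

Section HeatKernel.
Variables (R : realType) (n : nat) (w : 'M[R]_n.+1) (r : R).
Hypothesis w_graph : weighted_graph w.
Implicit Types (i j : 'I_n.+1) (u : 'I_n.+1 -> R).

Lemma deg_gt0 i j : 0 < w i j -> 0 < deg w i.
Proof.
case: w_graph => _ [w_ge0 _] wij.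
by rewrite /deg (bigD1 j) //= ltr_pwDl // sumr_ge0.
Qed.

Lemma laplacian_rowsum i : \sum_j laplacian w r i j = 0.
Proof.
under eq_bigr do rewrite mxE; rewrite -mulr_sumr sumrB (bigD1 i) //= eqxx mul1r.
rewrite big1 => [|j /negbTE]; last by rewrite eq_sym => ->; rewrite mul0r.
by rewrite addr0 subrr mulr0.
Qed.

Lemma laplacian_weighted_colsum j : \sum_i deg w i `^ r * laplacian w r i j = 0.
Proof.
case: w_graph => w_sym [w_ge0 _].
have weighted_entry i : deg w i `^ r * laplacian w r i j = (i == j)%:R * deg w i - w i j.
  rewrite mxE; have [d0|d_neq0] := eqVneq (deg w i) 0.
    (* the inverse in [laplacian] is junk here, but the row of [w] vanishes *)
    have wij0 : w i j = 0 by apply: (psumr_eq0P _ d0) => // l _.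
    by rewrite d0 wij0 !(mulr0, subr0).
  by rewrite mulrA mulfV ?mul1r // powR_eq0 negb_and d_neq0.
under eq_bigr do rewrite weighted_entry.
rewrite sumrB (bigD1 j) //= eqxx mul1r big1 ?addr0 => [|i /negbTE->]; last by rewrite mul0r.
by rewrite /deg; under eq_bigr do rewrite w_sym; rewrite subrr.
Qed.

Lemma laplacian_offdiag i j : i != j -> laplacian w r i j = - ((deg w i `^ r)^-1 * w i j).
Proof. by move=> /negbTE ij; rewrite mxE ij mul0r sub0r mulrN. Qed.

Definition heat_kernel (tau : R) := expmx (- (tau *: laplacian w r)).

Lemma heat_kernel_gt0 (tau : R) i j :
  connected_graph w -> 0 < tau -> 0 < heat_kernel tau i j.
Proof.
case: w_graph => _ [w_ge0 w_diag0] connected tau_gt0.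
have generator_offdiag k l : k != l ->
    (- (tau *: laplacian w r)) k l = tau * ((deg w k `^ r)^-1 * w k l).
  by move=> kl; rewrite 2!mxE laplacian_offdiag // mulrN opprK.
apply: expmx_Metzler_gt0 => [k l kl|].
  by rewrite generator_offdiag // !mulr_ge0 ?invr_ge0 ?powR_ge0 // ltW.
apply: connect_sub (connected i j) => k l /= wkl; apply: connect1 => /=.
have kl : k != l by apply: contraTneq wkl => ->; rewrite w_diag0 ltxx.
by rewrite generator_offdiag // !mulr_gt0 // invr_gt0 powR_gt0 // (deg_gt0 wkl).
Qed.

Lemma heat_kernel_rowsum (tau : R) i : \sum_j heat_kernel tau i j = 1.
Proof.
apply: expmx_rowsum => k; under eq_bigr do rewrite 2!mxE.
by rewrite sumrN -mulr_sumr laplacian_rowsum mulr0 oppr0.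
Qed.

Lemma heat_kernel_weighted_colsum (tau : R) j :
  \sum_i deg w i `^ r * heat_kernel tau i j = deg w j `^ r.
Proof.
apply: expmx_weighted_colsum => k; under eq_bigr do rewrite 2!mxE mulrN mulrCA.
by rewrite sumrN -mulr_sumr laplacian_weighted_colsum mulr0 oppr0.
Qed.

Lemma mass_heat (tau : R) u : mass w r (heat w r tau u) = mass w r u.
Proof.
rewrite /mass /heat; under eq_bigr do rewrite mulr_suml.
rewrite exchange_big; apply: eq_bigr => j _.
rewrite -[in RHS](heat_kernel_weighted_colsum tau j) mulr_sumr.
by apply: eq_bigr => i _; rewrite /heat_kernel; ring.
Qed.

Lemma heat_gt0 (tau : R) u i : connected_graph w -> 0 < tau ->
  (forall j, 0 <= u j) -> 0 < mass w r u -> 0 < heat w r tau u i.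
Proof.
move=> connected tau_gt0 u_ge0 mass_gt0.
have [j0 u_gt0] : exists j, 0 < u j.
  apply/existsP; apply: contraTT mass_gt0 => /existsPn u_le0.
  rewrite -leNgt sumr_le0 // => j _; rewrite mulr_le0_ge0 ?powR_ge0 //.
  by rewrite leNgt u_le0.
rewrite /heat; under eq_bigr do rewrite mulrC.
by apply: weighted_sum_gt0 u_gt0 _ => // j; apply: heat_kernel_gt0.
Qed.

Lemma heat_lt1 (tau : R) u i : connected_graph w -> 0 < tau ->
  (forall j, u j <= 1) -> mass w r u < mass w r (fun=> 1) -> heat w r tau u i < 1.
Proof.
move=> connected tau_gt0 u_le1 mass_lt; rewrite -subr_gt0.
have -> : 1 - heat w r tau u i = heat w r tau (fun j => 1 - u j) i.
  rewrite /heat -[in LHS](heat_kernel_rowsum tau i) -sumrB.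
  by apply: eq_bigr => j _; rewrite mulrBr mulr1.
apply: heat_gt0 => // [j|]; first by rewrite subr_ge0.
by rewrite /mass; under eq_bigr do rewrite mulrBl; rewrite sumrB subr_gt0.
Qed.

End HeatKernel.

Section Clipping.
Variable R : realType.
Implicit Types lam h nu : R.

Lemma clipf_gt lam h nu : 0 <= lam < 1 -> 0 <= h < 1 -> nu < lam * h ->
  h < clipf lam h nu.
Proof.
move=> /andP[lam0 lam1] /andP[h0 h1] nu_lt; rewrite /clipf.
case: ifP => // _; case: ifPn => [_|]; first by rewrite ltr_pdivlMr ?subr_gt0 //; nra.
by rewrite -leNgt; nra.
Qed.

Lemma clipf_lt lam h nu : 0 <= lam < 1 -> 0 < h <= 1 -> lam * h < nu ->
  clipf lam h nu < h.
Proof.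
move=> /andP[lam0 lam1] /andP[h0 h1] nu_gt; rewrite /clipf.
case: ifP => [|_]; first by nra.
by case: ifP => // _; rewrite ltr_pdivrMr ?subr_gt0 //; nra.
Qed.

Lemma sum_values_partition n (v q : 'I_n.+1 -> R) (f : R -> R) :
  \sum_(alpha <- values v) (\sum_(i | v i == alpha) q i) * f alpha =
  \sum_i q i * f (v i).
Proof.
rewrite /values; set s := undup _.
transitivity (\sum_(alpha <- s) \sum_i (if v i == alpha then q i * f (v i) else 0)).
  apply: eq_bigr => alpha _; rewrite big_mkcond mulr_suml; apply: eq_bigr => i _.
  by case: eqP => [<-|_]; rewrite ?mul0r.
rewrite exchange_big; apply: eq_bigr => i _.
rewrite (bigD1_seq (v i)) /= ?undup_uniq ?mem_undup ?map_f ?mem_enum // eqxx.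
by rewrite big1 ?addr0 // => alpha; rewrite eq_sym => /negbTE->.
Qed.

Lemma clipf_balance_bounds n (q h : 'I_n.+1 -> R) lam nu i0 :
  0 <= lam < 1 -> (forall i, 0 <= q i) -> 0 < q i0 -> (forall i, 0 < h i < 1) ->
  \sum_i q i * clipf lam (h i) nu = \sum_i q i * h i ->
  lam * min_values h <= nu <= lam * max_values h.
Proof.
move=> lam01 q_ge0 q_gt0 h01 balance; case/andP: (lam01) => lam0 _.
have excess_eq0 : \sum_i q i * (clipf lam (h i) nu - h i) = 0.
  by under eq_bigr do rewrite mulrBr; rewrite sumrB balance subrr.
apply/andP; split; rewrite leNgt; apply/negP => nu_out.
  suff : 0 < \sum_i q i * (clipf lam (h i) nu - h i) by rewrite excess_eq0 ltxx.
  apply: weighted_sum_gt0 q_gt0 _ => // i; rewrite subr_gt0 clipf_gt //.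
    by case/andP: (h01 i) => /ltW -> ->.
  by rewrite (lt_le_trans nu_out) // ler_wpM2l // /min_values bigmin_le.
suff : 0 < \sum_i q i * (h i - clipf lam (h i) nu).
  by under eq_bigr do rewrite -opprB mulrN; rewrite sumrN excess_eq0 oppr0 ltxx.
apply: weighted_sum_gt0 q_gt0 _ => // i; rewrite subr_gt0 clipf_lt //.
  by case/andP: (h01 i) => -> /ltW ->.
by rewrite (le_lt_trans _ nu_out) // ler_wpM2l // /max_values le_bigmax.
Qed.

End Clipping.

Theorem proposition28 (R : realType) (n : nat) (w : 'M[R]_n.+1) (r tau lam nu : R)
  (u : 'I_n.+1 -> R) :
  weighted_graph w -> connected_graph w ->
  0 <= r <= 1 ->
  0 < tau -> 0 <= lam < 1 ->
  (forall i, 0 <= u i <= 1) ->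
  0 < mass w r u < mass w r (fun _ => 1) ->
  mass w r u =
    \sum_(alpha <- values (heat w r tau u))
       a_coef w r (heat w r tau u) alpha * clipf lam alpha nu ->
  (lam * min_values (heat w r tau u) <= nu <= lam * max_values (heat w r tau u)) /\
  (0 < lam ->
     forall x, lam * min_values (heat w r tau u) <= x
               <= lam * max_values (heat w r tau u) -> 0 < x < lam).
Proof.
move=> w_graph connected _ tau_gt0 lam01 u01 /andP[mass_gt0 mass_lt] balance.
set h := heat w r tau u.
have h_gt0 i : 0 < h i by apply: heat_gt0 => // j; case/andP: (u01 j).
have h_lt1 i : h i < 1 by apply: heat_lt1 => // j; case/andP: (u01 j).
have [i0 q_gt0] : exists i, 0 < deg w i `^ r.
  apply/existsP; apply: contraTT (lt_trans mass_gt0 mass_lt) => /existsPn q_le0.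
  by rewrite -leNgt sumr_le0 // => i _; rewrite mul1r leNgt q_le0.
have h_bounds : lam * min_values h <= nu <= lam * max_values h.
  apply: (clipf_balance_bounds (q := fun i => deg w i `^ r) lam01 _ q_gt0).
  - by move=> i; apply: powR_ge0.
  - by move=> i; rewrite h_gt0 h_lt1.
  - move: balance; rewrite /a_coef -(mass_heat r w_graph tau u).
    rewrite (sum_values_partition _ _ (fun alpha => clipf lam alpha nu)) => <-.
    by apply: eq_bigr => i _; rewrite mulrC.
split=> // lam_gt0 x /andP[min_le max_ge].
have min_gt0 : 0 < min_values h by apply: lt_bigmin.
have max_lt1 : max_values h < 1 by apply: bigmax_lt.
by rewrite (lt_le_trans _ min_le) ?mulr_gt0 // (le_lt_trans max_ge) // gtr_pMr.
Qed.
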